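(* The solutions $\phi=\phi(b^2,s)$ of the PDE $\phi_{22}=2(\phi_1-s\phi_{12})$ are given by $$\phi(b^2,s)=f(b^2-s^2)+2s\int_0^s f'(b^2-\sigma^2)\,d\sigma+g(b^2)\,s,$$ where $f$ and $g$ are arbitrary smooth functions.
   Context: $\phi(b^2,s)$ is a smooth function of two variables; $\phi_1$ denotes the partial derivative with respect to the first variable $b^2$ and $\phi_2$ the partial derivative with respect to $s$; similarly $\phi_{12},\phi_{22}$. *)

From Stdlib Require Import Reals List.
From Coquelicot Require Import Coquelicot.
Open Scope R_scope.

Definition smooth1 (f : R -> R) : Prop :=
  forall (n : nat) (x : R), ex_derive (Derive_n f n) x.

(* Partial derivatives of a function phi(x, s) of two real variables,
   x playing the role of b^2 and s the second variable. *)
Definition partial1 (phi : R -> R -> R) : R -> R -> R :=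
  fun x s => Derive (fun t => phi t s) x.
Definition partial2 (phi : R -> R -> R) : R -> R -> R :=
  fun x s => Derive (fun t => phi x t) s.

Fixpoint iter_partial (l : list bool) (phi : R -> R -> R) : R -> R -> R :=
  match l with
  | nil => phi
  | cons b l' => if b then partial1 (iter_partial l' phi)
               else partial2 (iter_partial l' phi)
  end.

Definition smooth2 (phi : R -> R -> R) : Prop :=
  forall (l : list bool) (x s : R),
    ex_derive (fun t => iter_partial l phi t s) x /\
    ex_derive (fun t => iter_partial l phi x t) s /\
    continuous (fun p : R * R => iter_partial l phi (fst p) (snd p)) (x, s).

Definition phi_1 (phi : R -> R -> R) := partial1 phi.
Definition phi_12 (phi : R -> R -> R) := partial2 (partial1 phi).
Definition phi_22 (phi : R -> R -> R) := partial2 (partial2 phi).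

(* Put psi = phi - s phi_2 ([tangent_intercept]).  Then psi_1 = phi_1 - s phi_12
   and psi_2 = -s phi_22, so the equation becomes the transport equation
   psi_2 = -2 s psi_1, whose solutions are constant along the parabolas
   x + s^2 = const: psi (x, s) = f (x - s^2) with f = phi (., 0).  Hence
   phi_22 = 2 psi_1 = 2 f' (x - s^2); integrating once in s gives
   phi_2 = 2 int_0^s f' (x - sigma^2) dsigma + g (x), and phi = psi + s phi_2
   is the stated formula.  Conversely, the formula yields the same expressions
   for psi and phi_22, and psi_1 = f' (x - s^2) gives the equation back. *)

From Stdlib Require Import Reals Lra List.
From Coquelicot Require Import Coquelicot.
Open Scope R_scope.

Lemma constant_of_is_derive_0 (h : R -> R) a b :
  (forall t, is_derive h t 0) -> h a = h b.
Proof.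
  intros Hh.
  destruct (MVT_gen h a b (fun _ => 0)) as [c [_ Hc]].
  - intros t _. apply Hh.
  - intros t _. apply continuity_pt_filterlim.
    apply (ex_derive_continuous (K := R_AbsRing) (V := R_NormedModule)).
    eexists. apply Hh.
  - lra.
Qed.

Lemma increment_le_of_is_derive (h dh : R -> R) x u L e :
  (forall t, is_derive h t (dh t)) ->
  (forall c, Rabs (c - x) <= Rabs (u - x) -> Rabs (dh c - L) <= e) ->
  Rabs (h u - h x - L * (u - x)) <= e * Rabs (u - x).
Proof.
  intros Hh Hdh.
  destruct (MVT_gen h x u dh) as [c [Hc Hinc]].
  - intros t _. apply Hh.
  - intros t _. apply continuity_pt_filterlim.
    apply (ex_derive_continuous (K := R_AbsRing) (V := R_NormedModule)).
    eexists. apply Hh.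
  - assert (Hcx : Rabs (c - x) <= Rabs (u - x)).
    { unfold Rmin, Rmax in Hc. unfold Rabs.
      repeat destruct Rle_dec; repeat destruct Rcase_abs; lra. }
    rewrite Hinc.
    replace (dh c * (u - x) - L * (u - x)) with ((dh c - L) * (u - x)) by ring.
    rewrite Rabs_mult. apply Rmult_le_compat_r; [apply Rabs_pos | auto].
Qed.

Lemma differentiable_pt_lim_of_partials (Q Q1 Q2 : R -> R -> R) x y :
  (forall u v, is_derive (fun t => Q t v) u (Q1 u v)) ->
  (forall u v, is_derive (fun t => Q u t) v (Q2 u v)) ->
  continuity_2d_pt Q1 x y -> continuity_2d_pt Q2 x y ->
  differentiable_pt_lim Q x y (Q1 x y) (Q2 x y).
Proof.
  intros HQ1 HQ2 HC1 HC2 eps.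
  assert (He : 0 < eps / 2) by (destruct eps; simpl; lra).
  destruct (HC1 (mkposreal _ He)) as [d1 Hd1].
  destruct (HC2 (mkposreal _ He)) as [d2 Hd2].
  assert (Hd : 0 < Rmin d1 d2) by (apply Rmin_pos; [destruct d1 | destruct d2]; auto).
  exists (mkposreal _ Hd); simpl. intros u v Hu Hv.
  pose proof (Rmin_l d1 d2). pose proof (Rmin_r d1 d2).
  assert (Hx : Rabs (Q u v - Q x v - Q1 x y * (u - x)) <= eps / 2 * Rabs (u - x)).
  { apply (increment_le_of_is_derive (fun t => Q t v) (fun t => Q1 t v)); [auto |].
    intros c Hc. left. apply (Hd1 c v); lra. }
  assert (Hy : Rabs (Q x v - Q x y - Q2 x y * (v - y)) <= eps / 2 * Rabs (v - y)).
  { apply (increment_le_of_is_derive (fun t => Q x t) (Q2 x)); [auto |].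
    intros c Hc. left. apply (Hd2 x c); [| lra].
    rewrite Rminus_diag, Rabs_R0. destruct d2; simpl; lra. }
  replace (Q u v - Q x y - (Q1 x y * (u - x) + Q2 x y * (v - y))) with
    ((Q u v - Q x v - Q1 x y * (u - x)) + (Q x v - Q x y - Q2 x y * (v - y))) by ring.
  pose proof (Rmax_l (Rabs (u - x)) (Rabs (v - y))).
  pose proof (Rmax_r (Rabs (u - x)) (Rabs (v - y))).
  pose proof (Rabs_triang (Q u v - Q x v - Q1 x y * (u - x))
                          (Q x v - Q x y - Q2 x y * (v - y))).
  destruct eps as [e epos]; simpl in *. nra.
Qed.

Lemma transport_along_parabolas (Q Q1 Q2 : R -> R -> R) :
  (forall u v, is_derive (fun t => Q t v) u (Q1 u v)) ->
  (forall u v, is_derive (fun t => Q u t) v (Q2 u v)) ->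
  (forall u v, continuity_2d_pt Q1 u v) ->
  (forall u v, continuity_2d_pt Q2 u v) ->
  (forall u v, Q2 u v = - (2 * v * Q1 u v)) ->
  forall x s, Q x s = Q (x - s ^ 2) 0.
Proof.
  intros HQ1 HQ2 HC1 HC2 Htransport x s.
  set (a := fun t => x - s ^ 2 + t ^ 2).
  assert (Hcurve : forall t, is_derive (fun t => Q (a t) t) t 0).
  { intros t. apply is_derive_Reals.
    assert (Ha : is_derive a t (2 * t)) by (unfold a; auto_derive; [auto | ring]).
    apply is_derive_Reals in Ha.
    replace 0 with (Q1 (a t) t * (2 * t) + Q2 (a t) t * 1)
      by (rewrite Htransport; ring).
    apply derivable_pt_lim_comp_2d; auto using derivable_pt_lim_id.
    apply differentiable_pt_lim_of_partials; auto. }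
  pose proof (constant_of_is_derive_0 _ s 0 Hcurve) as Hs.
  unfold a in Hs. replace (x - s ^ 2 + s ^ 2) with x in Hs by ring.
  replace (x - s ^ 2 + 0 ^ 2) with (x - s ^ 2) in Hs by ring.
  exact Hs.
Qed.

Definition integral_Df (f : R -> R) (x s : R) : R :=
  RInt (fun sigma => Derive f (x - sigma ^ 2)) 0 s.

Section Smooth1.

Variable f : R -> R.
Hypothesis Hf : smooth1 f.

Lemma smooth1_ex_derive y : ex_derive f y.
Proof. exact (Hf 0%nat y). Qed.

Lemma smooth1_ex_derive_Derive y : ex_derive (Derive f) y.
Proof. exact (Hf 1%nat y). Qed.

Variable x : R.

Lemma continuous_Derive_parabola z :
  continuous (fun sigma => Derive f (x - sigma ^ 2)) z.
Proof.
  apply (ex_derive_continuous (K := R_AbsRing) (V := R_NormedModule)).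
  auto_derive. apply smooth1_ex_derive_Derive.
Qed.

Lemma is_derive_integral_Df s :
  is_derive (integral_Df f x) s (Derive f (x - s ^ 2)).
Proof.
  apply (is_derive_RInt (fun sigma => Derive f (x - sigma ^ 2)) _ 0);
    [| apply continuous_Derive_parabola].
  exists (mkposreal 1 Rlt_0_1). intros b _.
  apply (RInt_correct (V := R_CompleteNormedModule)).
  apply (ex_RInt_continuous (V := R_CompleteNormedModule)).
  intros z _. apply continuous_Derive_parabola.
Qed.

Lemma is_derive_formula_in_s c s :
  is_derive (fun t => f (x - t ^ 2) + 2 * t * integral_Df f x t + c * t) s
            (2 * integral_Df f x s + c).
Proof.
  pose proof (is_derive_integral_Df s) as HI.
  auto_derive.
  - split; [apply smooth1_ex_derive | split; [eexists; exact HI | exact I]].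
  - replace (Derive (fun t : R => integral_Df f x t) s) with (Derive f (x - s ^ 2))
      by (symmetry; apply is_derive_unique, HI).
    replace (x + - (s * (s * 1))) with (x - s ^ 2) by ring.
    change (fun t : R => f t) with f. ring.
Qed.

Lemma is_derive_partial2_formula_in_s c s :
  is_derive (fun t => 2 * integral_Df f x t + c) s (2 * Derive f (x - s ^ 2)).
Proof.
  pose proof (is_derive_integral_Df s) as HI.
  auto_derive.
  - eexists; exact HI.
  - replace (Derive (fun t : R => integral_Df f x t) s) with (Derive f (x - s ^ 2))
      by (symmetry; apply is_derive_unique, HI). now rewrite Rmult_1_l.
Qed.

End Smooth1.

Definition tangent_intercept (phi : R -> R -> R) (x s : R) : R :=
  phi x s - s * partial2 phi x s.

Section Smooth2.

Variable phi : R -> R -> R.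
Hypothesis Hphi : smooth2 phi.

Lemma smooth2_is_derive1 l x s :
  is_derive (fun t => iter_partial l phi t s) x (iter_partial (true :: l) phi x s).
Proof. apply Derive_correct, (Hphi l x s). Qed.

Lemma smooth2_is_derive2 l x s :
  is_derive (fun t => iter_partial l phi x t) s (iter_partial (false :: l) phi x s).
Proof. apply Derive_correct, (Hphi l x s). Qed.

Lemma smooth2_continuity_2d l x s : continuity_2d_pt (iter_partial l phi) x s.
Proof. apply continuity_2d_pt_filterlim, (Hphi l x s). Qed.

Lemma smooth2_partial_comm l x s :
  iter_partial (true :: false :: l) phi x s = iter_partial (false :: true :: l) phi x s.
Proof.
  pose proof (Schwarz (iter_partial l phi) x s) as Hschwarz.
  simpl in Hschwarz |- *; unfold partial1, partial2. apply Hschwarz.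
  - exists (mkposreal 1 Rlt_0_1). intros u v _ _.
    split; [apply (Hphi l u v) |]. split; [apply (Hphi l u v) |].
    split; [apply (Hphi (false :: l) u v) | apply (Hphi (true :: l) u v)].
  - apply (smooth2_continuity_2d (true :: false :: l)).
  - apply (smooth2_continuity_2d (false :: true :: l)).
Qed.

Lemma smooth1_slice l : smooth1 (fun y => iter_partial l phi y 0).
Proof.
  assert (Hn : forall n y, Derive_n (fun y => iter_partial l phi y 0) n y
                          = iter_partial (repeat true n ++ l) phi y 0).
  { induction n as [| n IHn]; intros y; [reflexivity |].
    apply Derive_ext, IHn. }
  intros n y. apply (ex_derive_ext (fun y => iter_partial (repeat true n ++ l) phi y 0)).
  - intros t. symmetry. apply Hn.
  - apply (Hphi (repeat true n ++ l) y 0).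
Qed.

Lemma is_derive1_tangent_intercept x s :
  is_derive (fun t => tangent_intercept phi t s) x (phi_1 phi x s - s * phi_12 phi x s).
Proof.
  unfold phi_12. change (partial2 (partial1 phi) x s)
    with (iter_partial (false :: true :: nil) phi x s).
  rewrite <- smooth2_partial_comm.
  apply (is_derive_minus (fun t => phi t s) (fun t => s * partial2 phi t s)).
  - apply (smooth2_is_derive1 nil x s).
  - apply is_derive_scal, (smooth2_is_derive1 (false :: nil) x s).
Qed.

Lemma is_derive2_tangent_intercept x s :
  is_derive (fun t => tangent_intercept phi x t) s (- (s * phi_22 phi x s)).
Proof.
  replace (- (s * phi_22 phi x s))
    with (partial2 phi x s - (1 * partial2 phi x s + s * phi_22 phi x s)) by ring.
  apply (is_derive_minus (fun t => phi x t) (fun t => t * partial2 phi x t)).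
  - apply (smooth2_is_derive2 nil x s).
  - apply (is_derive_mult (fun t => t) (fun t => partial2 phi x t) s 1).
    + apply (is_derive_id (K := R_AbsRing)).
    + apply (smooth2_is_derive2 (false :: nil) x s).
    + apply Rmult_comm.
Qed.

Lemma tangent_intercept_parabolic_Derive (f : R -> R) :
  smooth1 f -> (forall x s, tangent_intercept phi x s = f (x - s ^ 2)) ->
  forall x s, phi_1 phi x s - s * phi_12 phi x s = Derive f (x - s ^ 2).
Proof.
  intros Hf Hpsi x s.
  rewrite <- (is_derive_unique _ _ _ (is_derive1_tangent_intercept x s)).
  rewrite (Derive_ext _ (fun t => f (t - s ^ 2))) by (intros; apply Hpsi).
  apply is_derive_unique. auto_derive.
  - apply (smooth1_ex_derive f Hf).
  - replace (x + - (s * (s * 1))) with (x - s ^ 2) by ring. apply Rmult_1_l.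
Qed.

Lemma tangent_intercept_of_pde :
  (forall x s, phi_22 phi x s = 2 * (phi_1 phi x s - s * phi_12 phi x s)) ->
  forall x s, tangent_intercept phi x s = phi (x - s ^ 2) 0.
Proof.
  intros Hpde x s.
  rewrite (transport_along_parabolas (tangent_intercept phi)
             (fun u v => phi_1 phi u v - v * phi_12 phi u v)
             (fun u v => - (v * phi_22 phi u v))).
  - unfold tangent_intercept. ring.
  - exact is_derive1_tangent_intercept.
  - exact is_derive2_tangent_intercept.
  - intros u v. apply continuity_2d_pt_minus.
    + apply (smooth2_continuity_2d (true :: nil)).
    + apply continuity_2d_pt_mult; [apply continuity_2d_pt_id2 |].
      apply (smooth2_continuity_2d (false :: true :: nil)).
  - intros u v. apply continuity_2d_pt_opp, continuity_2d_pt_mult.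
    + apply continuity_2d_pt_id2.
    + apply (smooth2_continuity_2d (false :: false :: nil)).
  - intros u v. rewrite Hpde. ring.
Qed.

End Smooth2.

Lemma pde_solution_representation (phi : R -> R -> R) :
  smooth2 phi ->
  (forall x s, phi_22 phi x s = 2 * (phi_1 phi x s - s * phi_12 phi x s)) ->
  forall x s, phi x s = phi (x - s ^ 2) 0
                        + 2 * s * integral_Df (fun y => phi y 0) x s
                        + partial2 phi x 0 * s.
Proof.
  intros Hphi Hpde x s.
  set (f := fun y => phi y 0).
  pose proof (tangent_intercept_of_pde phi Hphi Hpde) as Hpsi.
  assert (H22 : forall t, phi_22 phi x t = 2 * Derive f (x - t ^ 2)).
  { intros t. rewrite Hpde, (tangent_intercept_parabolic_Derive phi Hphi f); auto.
    apply (smooth1_slice phi Hphi nil). }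
  assert (H2 : partial2 phi x s = 2 * integral_Df f x s + partial2 phi x 0).
  { assert (Hconst : forall t, is_derive
      (fun t => partial2 phi x t - (2 * integral_Df f x t + partial2 phi x 0)) t 0).
    { intros t. replace 0 with (phi_22 phi x t - 2 * Derive f (x - t ^ 2))
        by (rewrite H22; ring).
      apply (is_derive_minus (fun t => partial2 phi x t)).
      - apply (smooth2_is_derive2 phi Hphi (false :: nil) x t).
      - apply is_derive_partial2_formula_in_s, (smooth1_slice phi Hphi nil). }
    pose proof (constant_of_is_derive_0 _ s 0 Hconst) as Hs. cbv beta in Hs.
    unfold integral_Df in Hs at 2. rewrite RInt_point in Hs.
    unfold zero in Hs; simpl in Hs. lra. }
  pose proof (Hpsi x s) as Hxs. unfold tangent_intercept in Hxs.
  rewrite H2 in Hxs. fold f. lra.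
Qed.

Lemma formula_solves_pde (phi : R -> R -> R) (f g : R -> R) :
  smooth2 phi -> smooth1 f ->
  (forall x s, phi x s = f (x - s ^ 2) + 2 * s * integral_Df f x s + g x * s) ->
  forall x s, phi_22 phi x s = 2 * (phi_1 phi x s - s * phi_12 phi x s).
Proof.
  intros Hphi Hf Hformula.
  assert (H2 : forall x s, partial2 phi x s = 2 * integral_Df f x s + g x).
  { intros x s. unfold partial2.
    rewrite (Derive_ext _ _ _ (Hformula x)).
    apply is_derive_unique, is_derive_formula_in_s, Hf. }
  assert (Hpsi : forall x s, tangent_intercept phi x s = f (x - s ^ 2)).
  { intros x s. unfold tangent_intercept. rewrite Hformula, H2. ring. }
  intros x s.
  rewrite (tangent_intercept_parabolic_Derive phi Hphi f Hf Hpsi).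
  unfold phi_22, partial2 at 1.
  rewrite (Derive_ext _ _ _ (H2 x)).
  apply is_derive_unique, is_derive_partial2_formula_in_s, Hf.
Qed.

Theorem lemma5p1 :
  forall phi : R -> R -> R,
    smooth2 phi ->
    ((forall x s : R,
        phi_22 phi x s = 2 * (phi_1 phi x s - s * phi_12 phi x s))
     <->
     (exists f g : R -> R,
        smooth1 f /\ smooth1 g /\
        forall x s : R,
          phi x s = f (x - s ^ 2)
                    + 2 * s * RInt (fun sigma => Derive f (x - sigma ^ 2)) 0 s
                    + g x * s)).
Proof.
  intros phi Hphi. split.
  - intros Hpde. exists (fun y => phi y 0), (fun y => partial2 phi y 0).
    split; [apply (smooth1_slice phi Hphi nil) |].
    split; [apply (smooth1_slice phi Hphi (false :: nil)) |].
    exact (pde_solution_representation phi Hphi Hpde).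
  - intros [f [g [Hf [_ Hformula]]]].
    exact (formula_solves_pde phi f g Hphi Hf Hformula).
Qed.
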